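(* Let $r\geq 3$. If a $3$-connected $r$-graph $G$ has a $3$-vertex-cut $S$ such that $G-S$ contains at least three components of odd order, then either $G$ has a non-trivial tight edge-cut or the underlying simple graph $G_s$ is isomorphic to $K_{3,3}$.
   Context: Graphs are finite, may have parallel edges but no loops. $\partial_G(X)$ is the set of edges with exactly one end in $X\subseteq V(G)$. An $r$-graph is an $r$-regular graph $G$ with $|\partial_G(X)|\geq r$ for every $X\subseteq V(G)$ of odd cardinality. An edge-cut $\partial_G(X)$ of an $r$-graph $G$ is a non-trivial tight edge-cut if $|X|$ is odd, $|\partial_G(X)|=r$, and $|X|>1$ and $|V(G)\setminus X|>1$. $G_s$ is the underlying simple graph of $G$. A $3$-vertex-cut is a set of $3$ vertices whose removal increases the number of components. *)

From mathcomp Require Import all_boot.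
Set Implicit Arguments. Unset Strict Implicit. Unset Printing Implicit Defensive.

(* A finite loopless multigraph on vertex set V is given by its edge
   multiplicity function m : V -> V -> nat (m x y = number of parallel
   edges between x and y). *)
Definition multigraph (V : finType) (m : V -> V -> nat) : Prop :=
  (forall x y, m x y = m y x) /\ (forall x, m x x = 0).

Section G.
Variables (V : finType) (m : V -> V -> nat).

Definition deg (x : V) : nat := \sum_(y : V) m x y.

Definition cut_size (X : {set V}) : nat :=
  \sum_(x in X) \sum_(y in ~: X) m x y.

Definition regular (r : nat) : Prop := forall x, deg x = r.

Definition r_graph (r : nat) : Prop :=
  regular r /\ forall X : {set V}, odd #|X| -> r <= cut_size X.

Definition nontrivial_tight_cut (r : nat) (X : {set V}) : Prop :=
  [/\ odd #|X|, cut_size X = r, 1 < #|X| & 1 < #|~: X|].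

Definition adj_del (S : {set V}) : rel V :=
  fun x y => [&& x \notin S, y \notin S & 0 < m x y].

Definition comp_of (S : {set V}) (x : V) : {set V} :=
  [set y | (y \notin S) && connect (adj_del S) x y].

Definition is_component (S : {set V}) (C : {set V}) : Prop :=
  exists2 x, x \notin S & C = comp_of S x.

Definition ncomp (S : {set V}) : nat :=
  #|[set C : {set V} | [exists x, (x \notin S) && (C == comp_of S x)]]|.

Definition connected_del (S : {set V}) : Prop :=
  forall x y, x \notin S -> y \notin S -> connect (adj_del S) x y.

Definition k_connected (k : nat) : Prop :=
  k < #|V| /\ forall S : {set V}, #|S| < k -> connected_del S.

Definition three_vertex_cut (S : {set V}) : Prop :=
  #|S| = 3 /\ ncomp set0 < ncomp S.

Definition K33_adj (u v : bool * 'I_3) : bool := u.1 != v.1.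

Definition simple_iso_K33 : Prop :=
  exists f : V -> bool * 'I_3,
    bijective f /\ forall x y, (0 < m x y) = K33_adj (f x) (f y).

End G.

From mathcomp Require Import all_boot zify.
Set Implicit Arguments. Unset Strict Implicit. Unset Printing Implicit Defensive.

(* The three vertices of S have total degree 3r.  Every edge leaving an odd
   component C of G - S ends in S, and the r-graph condition gives at least r
   such edges for each of the three odd components, so all three are tight
   and S has no other edges.  A component with more than one vertex is then a
   non-trivial tight cut.  Otherwise the components are single vertices; by
   connectivity they are all of G - S, their only neighbours lie in S, and
   3-connectivity forces every vertex of S to be adjacent to each of them:
   G_s is K_{3,3} with sides S and V - S. *)

Section Multigraph.
Variables (V : finType) (m : V -> V -> nat).
Hypothesis msym : forall x y, m x y = m y x.
Hypothesis mxx : forall x, m x x = 0.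
Implicit Types A B S W : {set V}.

Definition edges_between (A B : {set V}) : nat :=
  \sum_(x in A) \sum_(y in B) m x y.

Lemma edges_betweenC A B : edges_between A B = edges_between B A.
Proof.
rewrite /edges_between exchange_big; apply: eq_bigr => y _.
by apply: eq_bigr => x _; rewrite msym.
Qed.

Lemma edges_betweenUl (A1 A2 : {set V}) B : [disjoint A1 & A2] ->
  edges_between (A1 :|: A2) B = edges_between A1 B + edges_between A2 B.
Proof.
move=> dA; rewrite /edges_between -bigU //.
by apply: eq_bigl => x; rewrite !inE.
Qed.

Lemma sum_deg_split A B :
  \sum_(x in A) deg m x = edges_between A B + edges_between A (~: B).
Proof.
rewrite edges_betweenC [edges_between A _]edges_betweenC -edges_betweenUl;
  last by rewrite disjoints_subset setCK.
rewrite setUCr edges_betweenC; apply: eq_bigr => x _.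
by apply: eq_bigl => y; rewrite inE.
Qed.

Lemma edges_between_eq0 A B x y :
  edges_between A B = 0 -> x \in A -> y \in B -> m x y = 0.
Proof.
rewrite /edges_between => /eqP; rewrite sum_nat_eq0 => /forall_inP eAB xA yB.
by move: (eAB x xA); rewrite sum_nat_eq0 => /forall_inP/(_ y yB)/eqP.
Qed.

Lemma adj_del_sym S : symmetric (adj_del m S).
Proof. by move=> x y; rewrite /adj_del msym andbCA. Qed.

Lemma comp_of_eq S x y : y \in comp_of m S x -> comp_of m S y = comp_of m S x.
Proof.
rewrite inE => /andP[_ cxy]; apply/setP => z; rewrite !inE.
by rewrite (same_connect (sym_connect_sym (adj_del_sym S)) cxy).
Qed.

Section Component.
Variables (S C : {set V}).
Hypothesis compC : is_component m S C.

Lemma component_notin y : y \in C -> y \notin S.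
Proof. by case: compC => x _ ->; rewrite inE => /andP[]. Qed.

Lemma component_adj y z : y \in C -> z \notin S -> 0 < m y z -> z \in C.
Proof.
case: compC => x _ -> yC zS myz; rewrite inE zS.
move: yC; rewrite inE => /andP[yS cxy]; apply: connect_trans cxy (connect1 _).
by rewrite /adj_del yS zS myz.
Qed.

Lemma component_disjoint D : is_component m S D -> C != D -> [disjoint C & D].
Proof.
case: compC => x _ -> [x' _ ->] neCD; apply/pred0P => y /=.
apply/negbTE/andP => [[yC yD]].
by move: neCD; rewrite -(comp_of_eq yC) -(comp_of_eq yD) eqxx.
Qed.

Lemma cut_size_component : cut_size m C = edges_between C S.
Proof.
apply: eq_bigr => y yC; rewrite (bigID (mem S)) /= [X in _ + X]big1 ?addn0.
  apply: eq_bigl => z; rewrite inE andbC; case zS: (z \in S) => //=.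
  by apply/negP => /component_notin; rewrite zS.
move=> z /andP[]; rewrite inE => zC zS; apply/eqP; rewrite -leqn0 leqNgt.
by apply: contra zC => myz; apply: component_adj myz.
Qed.

Lemma component_nontrivial_tight r :
  1 < #|S| -> odd #|C| -> cut_size m C = r -> 1 < #|C| ->
  nontrivial_tight_cut m r C.
Proof.
move=> S2 oC cutC C2; split=> //; apply: leq_trans S2 (subset_leq_card _).
apply/subsetP => s sS; rewrite inE.
by apply: contraL sS; apply: component_notin.
Qed.

Lemma small_component_nbhd y z : #|C| <= 1 -> y \in C -> 0 < m y z -> z \in S.
Proof.
move=> /card_le1_eqP Cuniq yC myz; apply: contraT => zS.
have zy : z = y by apply: Cuniq => //; apply: component_adj myz.
by move: myz; rewrite zy mxx.
Qed.

End Component.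

Lemma k_connected_nbhd_adj k S y s :
  k_connected m k -> #|S| <= k -> y \notin S ->
  (forall z, 0 < m y z -> z \in S) -> s \in S -> 0 < m s y.
Proof.
move=> [_ kc] Sk yS nbhdS sS; rewrite lt0n; apply/negP => /eqP msy0.
have Ss : #|S :\ s| < k by rewrite (cardsD1 s S) sS in Sk.
have cys : connect (adj_del m (S :\ s)) y s.
  by apply: kc; rewrite // !inE ?eqxx // (negbTE yS) andbF.
have cl : closed (adj_del m (S :\ s)) [set y].
  apply: intro_closed; first exact: sym_connect_sym (adj_del_sym _).
  move=> u v /and3P[_ vS muv]; rewrite inE => /eqP eu; subst u.
  move: vS; rewrite !inE (nbhdS v muv) andbT negbK => /eqP ev.
  by move: muv; rewrite ev msym msy0.
move: (closed_connect cl cys); rewrite !inE eqxx => /esym/eqP es.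
by move: sS; rewrite es (negbTE yS).
Qed.

Lemma closed_part_covers_compl S W x :
  connected_del m set0 -> x \in W ->
  (forall y z, y \in W -> z \notin S -> 0 < m y z -> z \in W) ->
  {in S & ~: (S :|: W), forall s y, m s y = 0} ->
  ~: S \subset W.
Proof.
move=> conn xW Wcl noS; pose U := ~: (S :|: W).
have clU : closed (adj_del m set0) U.
  apply: intro_closed; first exact: sym_connect_sym (adj_del_sym _).
  move=> u v /and3P[_ _ muv] uU; rewrite !inE negb_or; apply/andP; split.
    by apply: contraTN muv => vS; rewrite -leqNgt leqn0 msym noS.
  move: uU; rewrite !inE negb_or => /andP[uS]; apply: contra => vW.
  by apply: Wcl vW uS _; rewrite msym.
apply/subsetP => y; rewrite inE => yS.
have cyx : connect (adj_del m set0) y x by apply: conn; rewrite inE.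
move: (closed_connect clU cyx).
by rewrite !inE xW orbT (negbTE yS) /= => /negbFE.
Qed.

Lemma bipartite_33_iso_K33 S :
  #|S| = 3 -> #|~: S| = 3 ->
  (forall x y, (0 < m x y) = ((x \in S) != (y \in S))) ->
  simple_iso_K33 m.
Proof.
move=> S3 T3 adjE.
have /card_gt0P[s0 s0S] : 0 < #|S| by rewrite S3.
have /card_gt0P[t0 t0T] : 0 < #|~: S| by rewrite T3.
pose f x := (x \in S, if x \in S then cast_ord S3 (enum_rank_in s0S x)
                                 else cast_ord T3 (enum_rank_in t0T x)).
have finj : injective f.
  move=> x y [eS]; rewrite /f -eS; case: ifPn => xS /cast_ord_inj.
    by apply: enum_rank_in_inj; rewrite // -eS.
  by apply: enum_rank_in_inj; rewrite inE // -eS.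
exists f; split; last by move=> x y; rewrite adjE.
apply: (inj_card_bij finj).
by rewrite card_prod card_bool card_ord -(cardsC S) S3 T3.
Qed.

Lemma k_connected_complete_bipartite k S :
  k_connected m k -> #|S| <= k ->
  {in S &, forall x y, m x y = 0} ->
  (forall y z, y \notin S -> 0 < m y z -> z \in S) ->
  forall x y, (0 < m x y) = ((x \in S) != (y \in S)).
Proof.
move=> kc Sk indS nbhdS x y.
case xS: (x \in S); case yS: (y \in S) => /=.
- by rewrite indS.
- apply: k_connected_nbhd_adj kc Sk _ _ xS; rewrite ?yS // => z.
  by apply: nbhdS; rewrite yS.
- rewrite msym; apply: k_connected_nbhd_adj kc Sk _ _ yS; rewrite ?xS // => z.
  by apply: nbhdS; rewrite xS.
- by apply: contraFF yS; apply: nbhdS; rewrite xS.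
Qed.

Section ThreeComponents.
Variables (S C1 C2 C3 : {set V}).
Hypotheses (S3 : #|S| = 3) (c1 : is_component m S C1)
  (c2 : is_component m S C2) (c3 : is_component m S C3).
Hypothesis distinctC : [/\ C1 != C2, C1 != C3 & C2 != C3].

Lemma three_components_disjoint : [disjoint C1 :|: C2 & C3].
Proof.
case: distinctC => _ n13 n23.
rewrite -setI_eq0 setIUl setU_eq0 !setI_eq0.
by rewrite (component_disjoint c1 c3 n13) (component_disjoint c2 c3 n23).
Qed.

Lemma three_odd_components_tight r :
  r_graph m r -> [/\ odd #|C1|, odd #|C2| & odd #|C3|] ->
  [/\ cut_size m C1 = r, cut_size m C2 = r, cut_size m C3 = r &
      edges_between S (~: (C1 :|: C2 :|: C3)) = 0].
Proof.
move=> [reg rcut] [o1 o2 o3]; case: distinctC => n12 _ _.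
have degS : \sum_(s in S) deg m s = 3 * r.
  by rewrite (eq_bigr (fun _ => r)) ?sum_nat_const ?S3 // => s _; rewrite reg.
move: degS (rcut _ o1) (rcut _ o2) (rcut _ o3).
rewrite (sum_deg_split _ (C1 :|: C2 :|: C3)) edges_betweenC.
rewrite (edges_betweenUl _ three_components_disjoint).
rewrite (edges_betweenUl _ (component_disjoint c1 c2 n12)).
rewrite -(cut_size_component c1) -(cut_size_component c2).
rewrite -(cut_size_component c3).
by move=> *; split; lia.
Qed.

Lemma singleton_components_K33 :
  k_connected m 3 -> [/\ #|C1| = 1, #|C2| = 1 & #|C3| = 1] ->
  edges_between S (~: (C1 :|: C2 :|: C3)) = 0 -> simple_iso_K33 m.
Proof.
move=> kc [s1 s2 s3] noS; set W := C1 :|: C2 :|: C3.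
have nbhdW y z : y \in W -> 0 < m y z -> z \in S.
  rewrite !inE => /orP[/orP[]|] yC.
  - by apply: (small_component_nbhd c1 _ yC); rewrite s1.
  - by apply: (small_component_nbhd c2 _ yC); rewrite s2.
  - by apply: (small_component_nbhd c3 _ yC); rewrite s3.
have WS : ~: S = W.
  apply/eqP; rewrite eqEsubset; apply/andP; split.
    have /card_gt0P[x xC1] : 0 < #|C1| by rewrite s1.
    apply: (closed_part_covers_compl (x := x)).
    - by case: kc => _; apply; rewrite cards0.
    - by rewrite !inE xC1.
    - by move=> y z yW zS /(nbhdW y z yW); rewrite (negbTE zS).
    - move=> s y sS; rewrite in_setC in_setU negb_or => /andP[_ yW].
      by apply: (edges_between_eq0 noS sS); rewrite in_setC.
  apply/subsetP => y yW; rewrite inE; move: yW; rewrite !inE => /orP[/orP[]|].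
  - exact: (component_notin c1).
  - exact: (component_notin c2).
  - exact: (component_notin c3).
have cardT : #|~: S| = 3.
  have cardsU_disjoint (A B : {set V}) :
      [disjoint A & B] -> #|A :|: B| = #|A| + #|B|.
    by move=> dAB; rewrite cardsU (disjoint_setI0 dAB) cards0 subn0.
  case: distinctC => n12 _ _.
  rewrite WS (cardsU_disjoint _ _ three_components_disjoint).
  by rewrite (cardsU_disjoint _ _ (component_disjoint c1 c2 n12)) s1 s2 s3.
apply: (bipartite_33_iso_K33 S3 cardT).
apply: (k_connected_complete_bipartite kc); first by rewrite S3.
- by move=> x y xS yS; apply: edges_between_eq0 noS xS _; rewrite -/W -WS setCK.
- by move=> y z yS; apply: nbhdW; rewrite -WS inE.
Qed.

End ThreeComponents.

End Multigraph.

Theorem lemma2p6 (r : nat) (V : finType) (m : V -> V -> nat) :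
  3 <= r ->
  multigraph m ->
  r_graph m r ->
  k_connected m 3 ->
  forall S : {set V},
    three_vertex_cut m S ->
    (exists C1 C2 C3 : {set V},
        [/\ is_component m S C1, is_component m S C2, is_component m S C3,
            [/\ odd #|C1|, odd #|C2| & odd #|C3|] &
            [/\ C1 != C2, C1 != C3 & C2 != C3]]) ->
    (exists X : {set V}, nontrivial_tight_cut m r X) \/ simple_iso_K33 m.
Proof.
move=> _ [msym mxx] rG kc S [S3 _].
move=> [C1 [C2 [C3 [c1 c2 c3 [o1 o2 o3] distinctC]]]].
have [t1 t2 t3 noS] :=
  three_odd_components_tight msym S3 c1 c2 c3 distinctC rG (And3 o1 o2 o3).
have S2 : 1 < #|S| by rewrite S3.
have [g1|s1] := ltnP 1 #|C1|.
  by left; exists C1; apply: (component_nontrivial_tight c1).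
have [g2|s2] := ltnP 1 #|C2|.
  by left; exists C2; apply: (component_nontrivial_tight c2).
have [g3|s3] := ltnP 1 #|C3|.
  by left; exists C3; apply: (component_nontrivial_tight c3).
have single (C : {set V}) : odd #|C| -> #|C| <= 1 -> #|C| = 1.
  by case: #|C| => [|[|]].
right; apply: (singleton_components_K33 msym mxx S3 c1 c2 c3 distinctC kc) => //.
by split; apply: single.
Qed.
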